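(* Let $m$ be a positive integer, let $x,\bar x$ be positive integers and $r,\bar r\in\{0,\dots,m-1\}$. Suppose that for some positive integer $j$ we have $r_n(x,r)=r_n(\bar x,\bar r)$ for all $n\ge j$. Then $r_n(x,r)=r_n(\bar x,\bar r)$ for all $n\ge 0$.
   Context: Fix a positive integer $m$. The triangle $T_m$ is an array whose row $x$ ($x=1,2,\dots$) has $x$ entries, in columns $0,\dots,x-1$. Row $1$ is the single entry $1$. For $x>1$, row $x$ is obtained from row $x-1$ by rotating it cyclically left by $m$ positions (the entry in column $c$ of row $x-1$ moves to column $(c-m)\bmod(x-1)\in\{0,\dots,x-2\}$ of row $x$), then appending in column $x-1$ a new entry equal to $1$ plus the entry in column $0$ of row $x-1$. Entries are individual objects keeping their identity as they move. Tracking: for a positive integer $x$ and $r\in\{0,\dots,m-1\}$, follow the individual entry in row $x$, column $r\bmod x$. Let $(x_0,r_0),(x_1,r_1),\dots$ be the list, in strictly increasing lexicographic order, of all integer pairs $(y,c)$ with $y\ge x$, $0\le c\le m-1$, $(y,c)\ge (x,r)$ lexicographically, such that the tracked entry occupies column $c\bmod y$ of row $y$ (so $x_0=x$, $r_0=r$). Write $x_n(x,r)=x_n$, $r_n(x,r)=r_n$. *)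

From mathcomp Require Import all_boot.
Set Implicit Arguments. Unset Strict Implicit. Unset Printing Implicit Defensive.

(* Column, in row x + k of the triangle T_m, of the entry that sits in
   row x, column r mod x.  Passing from row y to row y+1 the entry in
   column c moves to column (c - m) mod y, computed here as
   (c + y - m mod y) mod y  (y >= 1, c < y). *)
Fixpoint trackpos (m x r k : nat) : nat :=
  match k with
  | 0 => r %% x
  | k'.+1 => let y := x + k' in (trackpos m x r k' + y - m %% y) %% y
  end.

(* (y,c) belongs to the tracking list of (x,r):
   y >= x, 0 <= c <= m-1, (y,c) >= (x,r) lexicographically, and the
   tracked entry occupies column c mod y of row y. *)
Definition track_hit (m x r y c : nat) : bool :=
  [&& x <= y, c < m, (x < y) || (r <= c) & c %% y == trackpos m x r (y - x)].

Definition hits_before (m x r y c : nat) : nat :=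
  \sum_(x <= y' < y.+1) \sum_(c' < m)
     (track_hit m x r y' c' && ((y' < y) || (c' < c))).

(* (y,c) = (x_n(x,r), r_n(x,r)), i.e. it is the element of index n
   (starting at 0) of the lexicographically increasing tracking list. *)
Definition nth_track (m x r n y c : nat) : Prop :=
  track_hit m x r y c /\ hits_before m x r y c = n.

Definition rn_agree (m x r xb rb n : nat) : Prop :=
  forall y c yb cb, nth_track m x r n y c -> nth_track m xb rb n yb cb -> c = cb.

(* An entry hit at (y, c) sits in row y at the virtual column c + y; each
   row moves it m columns to the left, so its next hit is at
   succ_hit m (y, c) = (y + (c + y) %/ m, (c + y) %% m), with nothing hit in
   between.  The tracking list is therefore the orbit of (x, r) under
   succ_hit, and y * m + c increases along it to y * (m + 1) + c.  If two
   orbits have equal columns from index j on, the difference of their rows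
   is multiplied by (m + 1) / m at every step, hence divisible by every
   power of m, hence zero: the orbits meet at index j, and since (y, c) is
   recovered from y * (m + 1) + c they agree at all earlier indices too. *)

From mathcomp Require Import all_boot zify.

Set Implicit Arguments.
Unset Strict Implicit.
Unset Printing Implicit Defensive.

Lemma modn_shift_sub Y v m : 0 < Y -> m <= v -> v < Y + m ->
  (v %% Y + Y - m %% Y) %% Y = v - m.
Proof.
move=> Y0 mv vY.
rewrite -[RHS](modn_small (_ : v - m < Y)); last lia.
have mY := ltn_pmod m Y0.
apply/eqP; rewrite -(eqn_modDr (m %% Y)) subnK; last lia.
by rewrite modnDr modn_mod modnDmr subnK.
Qed.

Lemma eqn_mod_ltn_gap d a b : a %% d = b %% d -> a < b -> a + d <= b.
Proof.
move=> eq_ab lt_ab; rewrite leqNgt; apply/negP => lt_bd.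
have : d %| b - a by rewrite -eqn_mod_dvd ?(ltnW lt_ab) // eq_ab.
by rewrite gtnNdvd //; lia.
Qed.

Definition lexrank (m : nat) (p : nat * nat) : nat := p.1 * m + p.2.

Lemma lexrank_ltE m a b a' b' : b < m -> b' < m ->
  (lexrank m (a, b) < lexrank m (a', b')) = (a < a') || (a == a') && (b < b').
Proof.
rewrite /lexrank /= => bm b'm.
case: (ltngtP a a') => [lt_aa'|lt_a'a|->]; last by rewrite ltn_add2l.
- have : a.+1 * m <= a' * m by rewrite leq_mul2r lt_aa' orbT.
  by rewrite mulSn; lia.
- have : a'.+1 * m <= a * m by rewrite leq_mul2r lt_a'a orbT.
  by rewrite mulSn; lia.
Qed.

Lemma lexrank_inj m p q : p.2 < m -> q.2 < m -> lexrank m p = lexrank m q -> p = q.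
Proof.
case: p q => [a b] [a' b'] /= bm b'm; rewrite /lexrank /= => e.
have m0 : 0 < m by lia.
have := congr1 (divn^~ m) e; have := congr1 (modn^~ m) e.
by rewrite /= !modnMDl !divnMDl // !modn_small // !divn_small // !addn0 => -> ->.
Qed.

Definition succ_hit (m : nat) (p : nat * nat) : nat * nat :=
  (p.1 + (p.2 + p.1) %/ m, (p.2 + p.1) %% m).

Lemma lexrank_succ_hit m p : lexrank m (succ_hit m p) = lexrank m.+1 p.
Proof. by rewrite /lexrank /succ_hit /= mulnDl -addnA -divn_eq mulnSr; lia. Qed.

Lemma iter_succ_hit_col_lt m p n : p.2 < m -> (iter n (succ_hit m) p).2 < m.
Proof. by case: n => //= n pm; rewrite ltn_pmod //; lia. Qed.

Lemma iter_succ_hit_pred_eq m p q n : p.2 < m -> q.2 < m ->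
  iter n.+1 (succ_hit m) p = iter n.+1 (succ_hit m) q ->
  iter n (succ_hit m) p = iter n (succ_hit m) q.
Proof.
move=> pm qm /(congr1 (lexrank m)) /=; rewrite !lexrank_succ_hit.
by apply: lexrank_inj; apply: ltnW; apply: iter_succ_hit_col_lt.
Qed.

Lemma ratio_recurrence_iter m j (Y Yb : nat -> nat) :
  (forall n, j <= n -> Y n.+1 * m + Yb n * m.+1 = Yb n.+1 * m + Y n * m.+1) ->
  forall t, Y (j + t) * m ^ t + Yb j * m.+1 ^ t = Yb (j + t) * m ^ t + Y j * m.+1 ^ t.
Proof.
move=> rec; elim=> [|t IH]; first by rewrite addn0 !expn0 !muln1 addnC.
have := congr1 (muln^~ m.+1) IH; have := congr1 (muln^~ (m ^ t)) (rec _ (leq_addr t j)).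
rewrite /= addnS !expnS !mulnDl; lia.
Qed.

(* The difference Y - Yb is multiplied by (m + 1) / m at every step, so it is
   divisible by every power of m. *)
Lemma ratio_recurrence_eq m j (Y Yb : nat -> nat) : 1 < m ->
  (forall n, j <= n -> Y n.+1 * m + Yb n * m.+1 = Yb n.+1 * m + Y n * m.+1) ->
  Y j = Yb j.
Proof.
move=> m1; wlog le_YYb : Y Yb / Y j <= Yb j => [sym rec|rec].
  have [le|/ltnW le] := leqP (Y j) (Yb j); first exact: sym.
  by apply/esym/(sym Yb Y le) => n /rec; lia.
have E := ratio_recurrence_iter rec (Yb j).
have dvd_diff : m ^ Yb j %| (Yb j - Y j) * m.+1 ^ Yb j.
  have -> : (Yb j - Y j) * m.+1 ^ Yb j = (Yb (j + Yb j) - Y (j + Yb j)) * m ^ Yb j.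
    by rewrite !mulnBl; lia.
  exact: dvdn_mull.
move: dvd_diff; rewrite Gauss_dvdl ?coprimeXl ?coprimeXr ?coprimenS //.
have lt_pow := ltn_expl (Yb j) m1.
by case: (posnP (Yb j - Y j)) => [z _|pos]; [lia | rewrite gtnNdvd //; lia].
Qed.

Lemma iter_succ_hit_eq m p q j : 1 < m -> p.2 < m -> q.2 < m ->
  (forall n, j <= n -> (iter n (succ_hit m) p).2 = (iter n (succ_hit m) q).2) ->
  forall n, iter n (succ_hit m) p = iter n (succ_hit m) q.
Proof.
move=> m1 pm qm col_eq.
have row_eq : (iter j (succ_hit m) p).1 = (iter j (succ_hit m) q).1.
  apply: (@ratio_recurrence_eq m j (fun n => (iter n _ p).1) (fun n => (iter n _ q).1) m1).
  move=> n jn; cbv beta; have := lexrank_succ_hit m (iter n (succ_hit m) p).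
  have := lexrank_succ_hit m (iter n (succ_hit m) q).
  rewrite /lexrank -!iterS (col_eq n jn) (col_eq n.+1 (leqW jn)) !mulnSr; lia.
have eq_j : iter j (succ_hit m) p = iter j (succ_hit m) q.
  by rewrite [LHS]surjective_pairing [RHS]surjective_pairing row_eq col_eq.
have down n k : iter (n + k) (succ_hit m) p = iter (n + k) (succ_hit m) q ->
    iter n (succ_hit m) p = iter n (succ_hit m) q.
  by elim: k => [|k IH]; rewrite ?addn0 // addnS => /(iter_succ_hit_pred_eq pm qm)/IH.
by move=> n; apply: (down n j); rewrite !iterD eq_j.
Qed.

Section Tracking.

Variables m x r : nat.
Hypotheses (m_gt0 : 0 < m) (x_gt0 : 0 < x) (r_lt_m : r < m).

Local Notation hit p := (track_hit m x r p.1 p.2).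
Local Notation hit_seq n := (iter n (succ_hit m) (x, r)).

Lemma track_hitP y c : reflect
  [/\ x <= y, c < m, (x < y) || (r <= c) & c %% y = trackpos m x r (y - x)]
  (track_hit m x r y c).
Proof. by apply: (iffP and4P) => -[? ? ? /eqP ?]; split. Qed.

Lemma trackpos_succ_row Y : x <= Y ->
  trackpos m x r (Y.+1 - x) = (trackpos m x r (Y - x) + Y - m %% Y) %% Y.
Proof. by move=> xY; rewrite subSn //= subnKC. Qed.

Lemma trackpos_shift Y v k : x <= Y -> v %% Y = trackpos m x r (Y - x) ->
  v < Y + m -> k.+1 * m <= v -> trackpos m x r (Y + k.+1 - x) = v - k.+1 * m.
Proof.
move=> xY tY vY; elim: k => [|k IH] km.
  by rewrite addn1 trackpos_succ_row // -tY modn_shift_sub //; lia.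
rewrite addnS trackpos_succ_row; last lia.
rewrite IH; last by rewrite mulSn in km; lia.
rewrite -[X in X + _](modn_small (_ : v - k.+1 * m < Y + k.+1)); last lia.
by rewrite modn_shift_sub; rewrite mulSn in km *; lia.
Qed.

Lemma hit_succ_hit p : hit p -> hit (succ_hit m p).
Proof.
case: p => y c /= /track_hitP[xy cm xr tp]; rewrite /succ_hit /=.
have [small|big] := ltnP (c + y) m.
  rewrite divn_small // modn_small // addn0; apply/track_hitP; split=> //.
    by case/orP: xr => ?; apply/orP; [left | right]; lia.
  by rewrite modnDr.
have [k Kk] : exists k, (c + y) %/ m = k.+1.
  by exists ((c + y) %/ m).-1; rewrite prednK // divn_gt0.
have rem : (c + y) %% m = c + y - k.+1 * m.
  by have := divn_eq (c + y) m; rewrite Kk; lia.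
apply/track_hitP; split; rewrite ?Kk ?ltn_pmod //; first lia.
  by apply/orP; left; lia.
have km : k.+1 * m <= c + y by rewrite -Kk leq_divM.
rewrite (trackpos_shift (v := c + y)) ?modnDr //; last lia.
by rewrite rem modn_small //; rewrite mulSn in km; lia.
Qed.

Lemma no_hit_between p q : hit p -> hit q ->
  lexrank m p < lexrank m q -> lexrank m q < lexrank m (succ_hit m p) -> False.
Proof.
case: p q => y c [y' c'] /= /track_hitP[xy cm _ tp] /track_hitP[xy' cm' _ tp'].
rewrite lexrank_succ_hit lexrank_ltE // /lexrank /= mulnSr.
case: (ltngtP y y') => // [lt_yy' _|eq_yy' /= lt_cc'] lt_next; last first.
  by subst y'; have := eqn_mod_ltn_gap (etrans tp (esym tp')) lt_cc'; lia.
have [k ?] : exists k, y' = y + k.+1 by exists (y' - y).-1; lia.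
subst y'; rewrite mulnDl in lt_next.
have km : k.+1 * m <= c + y by lia.
have := leq_mod c' (y + k.+1).
by rewrite tp' (trackpos_shift (v := c + y)) ?modnDr //; lia.
Qed.

Lemma lexrank_hit_ge p : hit p -> lexrank m (x, r) <= lexrank m p.
Proof.
case: p => y c /= /track_hitP[xy _ xr _].
rewrite /lexrank /=; case/orP: xr => [lt_xy|le_rc].
  have : x.+1 * m <= y * m by rewrite leq_mul2r lt_xy orbT.
  by rewrite mulSn; lia.
by rewrite leq_add // leq_mul2r xy orbT.
Qed.

Lemma hit_iter n : hit (hit_seq n).
Proof.
elim: n => [|n IH]; last exact: hit_succ_hit.
by apply/track_hitP; split; rewrite /= ?subnn ?leqnn ?orbT.
Qed.

Lemma lexrank_lt_succ_hit p : hit p -> lexrank m p < lexrank m (succ_hit m p).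
Proof. by case/track_hitP=> xy _ _ _; rewrite lexrank_succ_hit /lexrank mulnSr; lia. Qed.

Lemma leq_lexrank_iter n : n <= lexrank m (hit_seq n).
Proof.
by elim: n => // n IH; apply: leq_ltn_trans IH (lexrank_lt_succ_hit (hit_iter n)).
Qed.

Lemma hit_in_orbit p : hit p -> exists k, hit_seq k = p.
Proof.
move=> hp; pose below k := lexrank m (hit_seq k) <= lexrank m p.
have ub k : below k -> k <= lexrank m p := leq_trans (leq_lexrank_iter k).
have [k le_kp maxk] := ex_maxnP (ex_intro below 0 (lexrank_hit_ge hp)) ub.
rewrite /below in le_kp.
have /track_hitP[_ cm _ _] := hit_iter k; have /track_hitP[_ pm _ _] := hp.
exists k; apply: lexrank_inj cm pm _; apply/eqP; rewrite eqn_leq le_kp leqNgt.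
apply/negP => lt_kp; apply: (no_hit_between (hit_iter k) hp lt_kp).
by rewrite ltnNge; apply/negP => /(maxk k.+1); rewrite ltnn.
Qed.

Definition hits_below N p := \sum_(x <= y < N) \sum_(c < m)
  (track_hit m x r y c && (lexrank m (y, nat_of_ord c) < lexrank m p)).

Lemma hits_before_below N p : x <= p.1 -> p.2 < m -> p.1 < N ->
  hits_before m x r p.1 p.2 = hits_below N p.
Proof.
case: p => y c /= xy cm yN.
rewrite /hits_before /hits_below [RHS](@big_cat_nat _ _ _ y.+1) /=; [|lia..].
rewrite [X in _ = _ + X]big1_seq ?addn0 => [|y'].
  apply: eq_big_nat => y' /andP[_]; rewrite ltnS leq_eqVlt => le_y'y.
  apply: eq_bigr => c' _; rewrite lexrank_ltE //.
  by case/predU1P: le_y'y => [->|->]; rewrite ?eqxx ?ltnn.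
rewrite mem_index_iota => /andP[_ /andP[lt_yy' _]]; apply: big1 => c' _.
by rewrite lexrank_ltE // ltnNge (ltnW lt_yy') gtn_eqF // andbF.
Qed.

Lemma sum_pair_indicator a N y0 c0 : a <= y0 < N -> c0 < m ->
  \sum_(a <= y < N) \sum_(c < m) ((y, nat_of_ord c) == (y0, c0) : nat) = 1.
Proof.
move=> y0_in c0m; rewrite (bigD1_seq y0) ?mem_index_iota ?iota_uniq //=.
rewrite [X in _ + X]big1 ?addn0 => [|y ne_yy0]; last first.
  by apply: big1 => c _; rewrite xpair_eqE (negbTE ne_yy0).
rewrite (bigD1 (Ordinal c0m)) //= eqxx big1 // => c ne_c.
by rewrite xpair_eqE eqxx /=; case: eqP => // e; case/eqP: ne_c; apply: val_inj.
Qed.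

Lemma hits_below_succ_hit N p : hit p -> p.1 < N ->
  hits_below N (succ_hit m p) = (hits_below N p).+1.
Proof.
case: p => y0 c0 hp /= y0N; have /track_hitP[xy0 c0m _ _] := hp.
rewrite -addn1 -(@sum_pair_indicator x N y0 c0) ?xy0 // -big_split /=.
apply: eq_big_nat => y _; rewrite -big_split; apply: eq_bigr => c _ /=.
have lt_next := lexrank_lt_succ_hit hp.
have [/eqP[-> ->]|ne] := boolP ((y, nat_of_ord c) == (y0, c0)).
  by rewrite hp lt_next ltnn.
rewrite addn0; case hyc: (track_hit m x r y c) => //=.
have /track_hitP[_ cm _ _] := hyc; congr nat_of_bool.
case: (ltngtP (lexrank m (y, nat_of_ord c)) (lexrank m (y0, c0))).
- by move=> lt_p; apply: ltn_trans lt_p lt_next.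
- move=> lt_yc; apply: negbTE; apply/negP.
  exact: (@no_hit_between _ (y, nat_of_ord c) hp hyc lt_yc).
- by move/lexrank_inj => eq_p; case/eqP: ne; apply: eq_p.
Qed.

Lemma hits_before_iter n : hits_before m x r (hit_seq n).1 (hit_seq n).2 = n.
Proof.
elim: n => [|n IH].
  rewrite (hits_before_below (N := x.+1)) //.
  apply: big1_seq => y _; apply: big1 => c _.
  case hyc: track_hit => //=.
  by rewrite ltnNge (@lexrank_hit_ge (y, nat_of_ord c) hyc).
have /track_hitP[xy cm _ _] := hit_iter n.
have /track_hitP[xy' cm' _ _] := hit_iter n.+1.
have le_row : (hit_seq n).1 <= (hit_seq n.+1).1 by apply: leq_addr.
rewrite (hits_before_below (N := (hit_seq n.+1).1.+1)) //.
by rewrite hits_below_succ_hit ?hit_iter // -hits_before_below ?IH.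
Qed.

Lemma nth_trackE n y c : nth_track m x r n y c <-> hit_seq n = (y, c).
Proof.
split=> [[hyc <-]|e].
  have [k ek] := @hit_in_orbit (y, c) hyc.
  by have := hits_before_iter k; rewrite ek => ->.
by have := hits_before_iter n; have := hit_iter n; rewrite e; split.
Qed.

End Tracking.

Theorem mainTheorem2 (m x r xb rb j : nat) :
  0 < m -> 0 < x -> 0 < xb -> r < m -> rb < m -> 0 < j ->
  (forall n, j <= n -> rn_agree m x r xb rb n) ->
  forall n, rn_agree m x r xb rb n.
Proof.
move=> m_gt0 x_gt0 xb_gt0 rm rbm _ agree n y c yb cb.
move=> /(nth_trackE m_gt0 x_gt0 rm) e /(nth_trackE m_gt0 xb_gt0 rbm) eb.
have col_eq k : j <= k ->
    (iter k (succ_hit m) (x, r)).2 = (iter k (succ_hit m) (xb, rb)).2.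
  move=> jk; apply: (agree k jk (iter k _ (x, r)).1 _ (iter k _ (xb, rb)).1).
    by apply/(nth_trackE m_gt0 x_gt0 rm); exact: surjective_pairing.
  by apply/(nth_trackE m_gt0 xb_gt0 rbm); exact: surjective_pairing.
have [m_gt1|m_le1] := ltnP 1 m.
  move: e eb; rewrite (@iter_succ_hit_eq m (x, r) (xb, rb) j m_gt1 rm rbm col_eq n).
  by move=> -> [].
have := @iter_succ_hit_col_lt m (x, r) n rm.
have := @iter_succ_hit_col_lt m (xb, rb) n rbm.
by rewrite e eb /=; lia.
Qed.
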